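(* A group $G$ is isomorphic to an automaton group if and only if $G$ is isomorphic to an expanding automaton semigroup. Likewise, a group $G$ is isomorphic to a self-similar group if and only if $G$ is isomorphic to an expanding self-similar semigroup.
   Context: An expanding automaton is a quadruple $(Q,\Sigma,t,o)$ with $Q$ a set of states, $\Sigma$ a finite alphabet, $t:Q\times\Sigma\to Q$ and $o:Q\times\Sigma\to\Sigma^+$; a synchronous automaton has $o:Q\times\Sigma\to\Sigma$, and it is invertible if for each $q$ the map $\sigma\mapsto o(q,\sigma)$ is a permutation of $\Sigma$. Each state $q$ induces $q:\Sigma^*\to\Sigma^*$ by $q(\emptyset)=\emptyset$, $q(\sigma w)=o(q,\sigma)\,q'(w)$ with $q'=t(q,\sigma)$. An expanding automaton semigroup is the semigroup of maps generated under composition by the states of an expanding automaton with finitely many states; an expanding self-similar semigroup is the same allowing infinitely many states. An automaton group is the group generated by the states of a finite-state invertible synchronous automaton (the states act as bijections); a self-similar group is the group generated by the states of an invertible synchronous automaton with possibly infinitely many states. *)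

From mathcomp Require Import all_boot.
Set Implicit Arguments. Unset Strict Implicit. Unset Printing Implicit Defensive.

Definition is_group (G : Type) (mul : G -> G -> G) (one : G) (inv : G -> G) :=
  [/\ forall x y z, mul x (mul y z) = mul (mul x y) z,
      forall x, mul one x = x &
      forall x, mul (inv x) x = one].

Fixpoint exp_act (Q : Type) (S : Type) (t : Q -> S -> Q) (o : Q -> S -> seq S)
    (q : Q) (w : seq S) : seq S :=
  match w with
  | [::] => [::]
  | s :: w' => o q s ++ exp_act t o (t q s) w'
  end.

Definition sync_act (Q : Type) (S : Type) (t : Q -> S -> Q) (o : Q -> S -> S)
    (q : Q) (w : seq S) : seq S :=
  exp_act t (fun q s => [:: o q s]) q w.

Inductive sgen (A : Type) (gens : (A -> A) -> Prop) : (A -> A) -> Prop :=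
  | sgen_base f : gens f -> sgen gens f
  | sgen_comp f g : sgen gens f -> sgen gens g -> sgen gens (f \o g)
  | sgen_ext f g : sgen gens f -> f =1 g -> sgen gens g.

Inductive ggen (A : Type) (gens : (A -> A) -> Prop) : (A -> A) -> Prop :=
  | ggen_base f : gens f -> ggen gens f
  | ggen_id : ggen gens id
  | ggen_comp f g : ggen gens f -> ggen gens g -> ggen gens (f \o g)
  | ggen_inv f g : ggen gens f -> cancel f g -> cancel g f -> ggen gens g
  | ggen_ext f g : ggen gens f -> f =1 g -> ggen gens g.

Definition iso_to_maps (G : Type) (mul : G -> G -> G) (A : Type)
    (M : (A -> A) -> Prop) : Prop :=
  exists phi : G -> (A -> A),
    [/\ forall g, M (phi g),
        forall f, M f -> exists g, phi g =1 f,
        forall g h, phi g =1 phi h -> g = h &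
        forall g h, phi (mul g h) =1 (phi g \o phi h)].

Definition iso_automaton_group (G : Type) (mul : G -> G -> G) : Prop :=
  exists (S : finType) (Q : finType) (t : Q -> S -> Q) (o : Q -> S -> S),
    (forall q, bijective (o q)) /\
    iso_to_maps mul (ggen (fun f => exists q, f = sync_act t o q)).

Definition iso_self_similar_group (G : Type) (mul : G -> G -> G) : Prop :=
  exists (S : finType) (Q : Type) (t : Q -> S -> Q) (o : Q -> S -> S),
    (forall q, bijective (o q)) /\
    iso_to_maps mul (ggen (fun f => exists q, f = sync_act t o q)).

Definition iso_expanding_automaton_semigroup (G : Type) (mul : G -> G -> G) : Prop :=
  exists (S : finType) (Q : finType) (t : Q -> S -> Q) (o : Q -> S -> seq S),
    (forall q s, o q s <> [::]) /\
    iso_to_maps mul (sgen (fun f => exists q, f = exp_act t o q)).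

Definition iso_expanding_self_similar_semigroup (G : Type) (mul : G -> G -> G) : Prop :=
  exists (S : finType) (Q : Type) (t : Q -> S -> Q) (o : Q -> S -> seq S),
    (forall q s, o q s <> [::]) /\
    iso_to_maps mul (sgen (fun f => exists q, f = exp_act t o q)).

From mathcomp Require Import all_boot.
Set Implicit Arguments. Unset Strict Implicit. Unset Printing Implicit Defensive.

(** From a group to an expanding semigroup: adjoin to an invertible
    synchronous automaton an identity state and the inverse automaton; the
    semigroup generated by the enlarged automaton is the group generated by the
    original one.  Conversely, let [e] be the image of the identity in an
    expanding semigroup isomorphic to a group.  Every section of [e] at a letter
    it fixes is again idempotent, hence equal to [e], because a group has only
    one idempotent.  So [e] is the identity on words over the alphabet [A] of
    letters fixed by [e], and every element maps [A*] length-preservingly and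
    bijectively into [A*]; the generating states restricted to [A] form an
    invertible synchronous automaton generating the same group. *)

Lemma iso_to_maps_eq (G : Type) (mul : G -> G -> G) (A : Type)
    (M M' : (A -> A) -> Prop) :
  (forall f, M f <-> M' f) -> iso_to_maps mul M -> iso_to_maps mul M'.
Proof.
move=> eqM [phi [phi_in phi_onto phi_inj phiM]]; exists phi; split => //.
- by move=> g; apply/eqM.
- by move=> f /eqM; apply: phi_onto.
Qed.

Section GeneratedGroup.

Variables (A : Type) (gens H : (A -> A) -> Prop).

Lemma ggen_sgen :
  (forall f, gens f -> sgen H f) ->
  (forall f, gens f -> exists2 g, sgen H g & cancel f g /\ cancel g f) ->
  sgen H id ->
  forall f, ggen gens f -> sgen H f.
Proof.
move=> gensH gens_inv H_id f ggen_f.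
suff [] : sgen H f /\ exists2 g, sgen H g & cancel f g /\ cancel g f by [].
elim: ggen_f => {f} [f gens_f | | f g _ [Hf [f' Hf' [fK f'K]]] _ [Hg [g' Hg' [gK g'K]]]
                    | f g _ [Hf [f' Hf' [fK f'K]]] fgK gfK | f g _ [Hf [f' Hf' [fK f'K]]] eq_fg].
- by split; [exact: gensH | exact: gens_inv].
- by split=> //; exists id.
- split; first exact: sgen_comp.
  by exists (g' \o f'); [exact: sgen_comp | split=> x /=; rewrite ?fK ?gK ?f'K ?g'K].
- have eq_f'g : f' =1 g by move=> x; rewrite -{2}(f'K x) fgK.
  by split; [exact: sgen_ext Hf' eq_f'g | exists f].
- split; first exact: sgen_ext Hf eq_fg.
  by exists f' => //; split=> x; rewrite -?eq_fg ?fK ?f'K.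
Qed.

Lemma sgen_ggen : (forall f, H f -> ggen gens f) -> forall f, sgen H f -> ggen gens f.
Proof.
move=> Hgens f; elim=> {f} [f /Hgens // | f g _ Gf _ Gg | f g _ Gf eq_fg].
- exact: ggen_comp.
- exact: ggen_ext Gf eq_fg.
Qed.

End GeneratedGroup.

Section SymmetricAutomaton.

Variables (S : finType) (Q : Type) (t : Q -> S -> Q) (o : Q -> S -> S).
Hypothesis o_bij : forall q, bijective (o q).

(* State [None] acts as the identity, [inl q] as [q] and [inr q] as [q^-1]. *)
Definition sym_trans (x : option (Q + Q)) (s : S) : option (Q + Q) :=
  match x with
  | None => None
  | Some (inl q) => Some (inl (t q s))
  | Some (inr q) => Some (inr (t q (finv (o q) s)))
  end.

Definition sym_out (x : option (Q + Q)) (s : S) : seq S :=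
  match x with
  | None => [:: s]
  | Some (inl q) => [:: o q s]
  | Some (inr q) => [:: finv (o q) s]
  end.

Lemma sym_out_neq0 x s : sym_out x s <> [::].
Proof. by case: x => [[]|]. Qed.

Local Notation sym_act := (exp_act sym_trans sym_out).

Lemma sym_act_None w : sym_act None w = w.
Proof. by elim: w => //= s w ->. Qed.

Lemma sym_act_inl q w : sym_act (Some (inl q)) w = sync_act t o q w.
Proof. by elim: w q => //= s w IHw q; rewrite IHw. Qed.

Lemma sym_act_inrK q : cancel (sync_act t o q) (sym_act (Some (inr q))).
Proof.
move=> w; elim: w q => //= s w IHw q.
by rewrite finv_f ?IHw //; apply/bij_inj.
Qed.

Lemma sym_act_inrKV q : cancel (sym_act (Some (inr q))) (sync_act t o q).
Proof.
move=> w; elim: w q => //= s w IHw q.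
by rewrite /sync_act /= f_finv; [rewrite -/(sync_act _ _ _ _) IHw | apply/bij_inj].
Qed.

Lemma ggen_sym_act f :
  ggen (fun f => exists q, f = sync_act t o q) f <->
  sgen (fun f => exists x, f = sym_act x) f.
Proof.
have sgen_state x : sgen (fun f => exists x, f = sym_act x) (sym_act x).
  by apply: sgen_base; exists x.
have ggen_state q : ggen (fun f => exists q, f = sync_act t o q) (sync_act t o q).
  by apply: ggen_base; exists q.
split; [apply: ggen_sgen | apply: sgen_ggen].
- move=> _ [q ->]; apply: sgen_ext (sgen_state (Some (inl q))) _ => w.
  exact: sym_act_inl.
- move=> _ [q ->]; exists (sym_act (Some (inr q))) => //.
  by split; [exact: sym_act_inrK | exact: sym_act_inrKV].
- by apply: sgen_ext (sgen_state None) _ => w; rewrite sym_act_None.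
- move=> _ [[[q|q]|] ->].
  + by apply: ggen_ext (ggen_state q) _ => w; rewrite sym_act_inl.
  + exact: ggen_inv (ggen_state q) (@sym_act_inrK q) (@sym_act_inrKV q).
  + by apply: ggen_ext (ggen_id _) _ => w; rewrite sym_act_None.
Qed.

End SymmetricAutomaton.

Section ExpandingMaps.

Variables (S : Type) (Q : Type) (t : Q -> S -> Q) (o : Q -> S -> seq S).
Hypothesis o_neq0 : forall q s, o q s <> [::].

Local Notation M := (sgen (fun f => exists q, f = exp_act t o q)).

Lemma sgen_exp_nil f : M f -> f [::] = [::].
Proof. by elim=> {f} [_ [q ->] | f g _ f0 _ g0 | f g _ f0 eq_fg] //=; rewrite ?g0 -?eq_fg. Qed.

Lemma sgen_exp_size f : M f -> forall w, size w <= size (f w).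
Proof.
elim=> {f} [_ [q ->] | f g _ sizef _ sizeg | f g _ sizef eq_fg] w.
- elim: w q => //= s w IHw q; rewrite size_cat.
  case oqs: (o q s) => [|x xs]; first by case: (o_neq0 oqs).
  by rewrite /= addSn ltnS (leq_trans (IHw (t q s))) ?leq_addl.
- exact: leq_trans (sizeg w) (sizef _).
- by rewrite -eq_fg.
Qed.

Lemma sgen_exp_section f :
  M f -> forall u, exists2 f', M f' & forall w, f (u ++ w) = f u ++ f' w.
Proof.
elim=> {f} [_ [q ->] | f g _ secf _ secg | f g _ secf eq_fg] u.
- elim: u q => [|s u IHu] q /=.
    by exists (exp_act t o q) => //; apply: sgen_base; exists q.
  by have [f' Mf' catf] := IHu (t q s); exists f' => // w; rewrite catf catA.
- have [g' Mg' catg] := secg u; have [f' Mf' catf] := secf (g u).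
  by exists (f' \o g') => [|w /=]; [exact: sgen_comp | rewrite catg catf].
- by have [f' Mf' catf] := secf u; exists f' => // w; rewrite -!eq_fg.
Qed.

End ExpandingMaps.

Section GroupIdempotent.

Variables (G : Type) (mul : G -> G -> G) (one : G) (inv : G -> G).
Hypothesis hG : is_group mul one inv.

Lemma group_mulg1 x : mul x one = x.
Proof.
have [mulA mul1g mulVg] := hG.
have mulgV y : mul y (inv y) = one.
  by rewrite -[mul y _]mul1g -(mulVg (inv y)) -mulA (mulA (inv y)) mulVg mul1g.
by rewrite -(mulVg x) mulA mulgV mul1g.
Qed.

Lemma group_idem_one g : mul g g = g -> g = one.
Proof. by have [mulA mul1g mulVg] := hG => gg; rewrite -(mulVg g) -{3}gg mulA mulVg mul1g. Qed.

End GroupIdempotent.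

Section RestrictedAutomaton.

Variables (S : finType) (Q : Type) (t : Q -> S -> Q) (o : Q -> S -> seq S).
Hypothesis o_neq0 : forall q s, o q s <> [::].

Local Notation M := (sgen (fun f => exists q, f = exp_act t o q)).

Variables (G : Type) (mul : G -> G -> G) (one : G) (inv : G -> G).
Hypothesis hG : is_group mul one inv.

Variable phi : G -> seq S -> seq S.
Hypotheses (phi_in : forall g, M (phi g))
           (phi_onto : forall f, M f -> exists g, phi g =1 f)
           (phi_inj : forall g h, phi g =1 phi h -> g = h)
           (phiM : forall g h, phi (mul g h) =1 phi g \o phi h).

Local Notation e := (phi one).

Lemma phi_one_phi g w : e (phi g w) = phi g w.
Proof. by have [_ mul1g _] := hG; rewrite -[e _]/((e \o phi g) w) -phiM mul1g. Qed.

Lemma phi_phi_one g w : phi g (e w) = phi g w.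
Proof. by rewrite -[phi g _]/((phi g \o e) w) -phiM (group_mulg1 hG). Qed.

Lemma phi_invK g w : phi (inv g) (phi g w) = e w.
Proof.
by have [_ _ mulVg] := hG; rewrite -[phi _ _]/((phi (inv g) \o phi g) w) -phiM mulVg.
Qed.

Lemma idempotent_map_one f : M f -> (forall w, f (f w) = f w) -> f =1 e.
Proof.
move=> Mf ff; have [g phi_g] := phi_onto Mf.
suff g1 : g = one by move=> w; rewrite -phi_g g1.
apply: (group_idem_one hG); apply: phi_inj => w.
by rewrite phiM /= !phi_g ff.
Qed.

Definition fixed_letter (s : S) : bool := e [:: s] == [:: s].

Lemma e_cons s w : fixed_letter s -> e (s :: w) = s :: e w.
Proof.
move=> /eqP es; have [e' Me' cate] := sgen_exp_section (phi_in one) [:: s].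
have e_cons' v : e (s :: v) = s :: e' v by rewrite -cat1s cate es.
suff e'E : e' =1 e by rewrite e_cons' e'E.
apply: idempotent_map_one => // v.
by have := phi_one_phi one (s :: v); rewrite !e_cons' => -[].
Qed.

Lemma e_all_fixed w : all fixed_letter w -> e w = w.
Proof.
elim: w => [_|s w IHw /andP [fs fw]]; first exact: sgen_exp_nil.
by rewrite e_cons // IHw.
Qed.

Lemma e_singleton s x : e [:: s] = s :: x -> x = [::].
Proof.
move=> es; have [e' Me' cate] := sgen_exp_section (phi_in one) [:: s].
have := phi_one_phi one [:: s]; rewrite es -cat1s cate es => /(congr1 size).
rewrite !size_cat -[X in _ = X]addn0 => /addnI /size0nil e'x.
by have := sgen_exp_size o_neq0 Me' x; rewrite e'x leqn0 => /nilP.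
Qed.

Lemma all_fixed_e w : e w = w -> all fixed_letter w.
Proof.
elim: w => // s w IHw ew.
have fs : fixed_letter s.
  have [e' _ cate] := sgen_exp_section (phi_in one) [:: s].
  case es: (e [:: s]) => [|y x].
    by have := sgen_exp_size o_neq0 (phi_in one) [:: s]; rewrite es.
  have := cate w; rewrite cat1s ew es => -[ys _]; rewrite -ys in es.
  by rewrite /fixed_letter es (e_singleton es).
by rewrite /= fs IHw //; have := ew; rewrite e_cons // => -[].
Qed.

Lemma phi_all_fixed g w : all fixed_letter (phi g w).
Proof. exact/all_fixed_e/phi_one_phi. Qed.

Lemma size_phi g w : all fixed_letter w -> size (phi g w) = size w.
Proof.
move=> fw; apply/eqP; rewrite eqn_leq (sgen_exp_size o_neq0 (phi_in g)) andbT.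
by rewrite -{2}(e_all_fixed fw) -(phi_invK g) (sgen_exp_size o_neq0 (phi_in _)).
Qed.

Lemma phi_fixed_inj g : {in all fixed_letter &, injective (phi g)}.
Proof.
move=> u v fu fv eq_uv.
by rewrite -(e_all_fixed fu) -(e_all_fixed fv) -!(phi_invK g) eq_uv.
Qed.

Lemma out_fixed q s : fixed_letter s -> exists2 b, fixed_letter b & o q s = [:: b].
Proof.
move=> fs; have [g phi_g] := phi_onto (sgen_base (ex_intro _ q erefl)).
have fs1 : all fixed_letter [:: s] by rewrite /= fs.
have := size_phi g fs1; have := phi_all_fixed g [:: s]; rewrite phi_g /= cats0.
by case: (o q s) => [|b [|]] //= /andP [fb _] _; exists b.
Qed.

Definition fixed_alphabet : finType := {s : S | fixed_letter s}.

Lemma all_fixed_val (w : seq fixed_alphabet) : all fixed_letter (map val w).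
Proof. by apply/allP => _ /mapP [c _ ->]; exact: proj2_sig c. Qed.

Definition restr_trans q (a : fixed_alphabet) : Q := t q (val a).

(* The default values [a] are never used: [out_fixed] makes [o q (val a)] a fixed letter. *)
Definition restr_out q (a : fixed_alphabet) : fixed_alphabet :=
  insubd a (head (val a) (o q (val a))).

Lemma restr_outE q a : o q (val a) = [:: val (restr_out q a)].
Proof. by rewrite /restr_out; have [b fb ->] := out_fixed q (valP a); rewrite /= insubdK. Qed.

Lemma restr_actE q w :
  map val (sync_act restr_trans restr_out q w) = exp_act t o q (map val w).
Proof. by elim: w q => //= a w IHw q; rewrite restr_outE -IHw. Qed.

Lemma restr_out_bij q : bijective (restr_out q).
Proof.
apply: injF_bij => a b eq_ab; apply/val_inj.
have [g phi_g] := phi_onto (sgen_base (ex_intro _ q erefl)).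
suff [] : [:: val a] = [:: val b] by [].
apply: (@phi_fixed_inj g); [exact: (all_fixed_val [:: a]) | exact: (all_fixed_val [:: b]) |].
by rewrite !phi_g /= !restr_outE eq_ab.
Qed.

Lemma val_pmap_insub w :
  all fixed_letter w -> map val (pmap insub w : seq fixed_alphabet) = w.
Proof.
by move=> fw; rewrite (pmap_filter (insubK _)) (eq_filter (isSome_insub _)); apply/all_filterP.
Qed.

Definition restr_map g (w : seq fixed_alphabet) : seq fixed_alphabet :=
  pmap insub (phi g (map val w)).

Local Notation psi := restr_map.

Lemma restr_mapE g w : map val (psi g w) = phi g (map val w).
Proof. exact/val_pmap_insub/phi_all_fixed. Qed.

Lemma map_val_inj : injective (map val : seq fixed_alphabet -> seq S).
Proof. exact/inj_map/val_inj. Qed.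

Lemma restr_mapM g h : psi (mul g h) =1 psi g \o psi h.
Proof. by move=> w; apply: map_val_inj; rewrite /= !restr_mapE phiM. Qed.

Lemma restr_map_one : psi one =1 id.
Proof. by move=> w; apply: map_val_inj; rewrite restr_mapE e_all_fixed ?all_fixed_val. Qed.

Lemma restr_mapK g : cancel (psi g) (psi (inv g)).
Proof.
move=> w; apply: map_val_inj.
by rewrite !restr_mapE phi_invK e_all_fixed ?all_fixed_val.
Qed.

Lemma restr_map_inj g h : psi g =1 psi h -> g = h.
Proof.
move=> eq_gh; apply: phi_inj => w.
rewrite -phi_phi_one -(phi_phi_one h) -(val_pmap_insub (phi_all_fixed one w)).
by rewrite -!restr_mapE eq_gh.
Qed.

Local Notation R := (ggen (fun f => exists q, f = sync_act restr_trans restr_out q)).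

Lemma restr_map_state g q :
  phi g =1 exp_act t o q -> psi g =1 sync_act restr_trans restr_out q.
Proof. by move=> phi_g w; apply: map_val_inj; rewrite restr_mapE restr_actE phi_g. Qed.

Lemma restr_map_in g : R (psi g).
Proof.
have [f Mf] : exists2 f, M f & phi g =1 f by exists (phi g).
elim: Mf g => {f} [_ [q ->] g /restr_map_state psi_g | f1 f2 M1 IH1 M2 IH2 g phi_g
                  | f1 f2 _ IH eq_f g phi_g].
- by apply: ggen_ext (ggen_base (ex_intro _ q erefl)) _ => w; rewrite psi_g.
- have [g1 phi_g1] := phi_onto M1; have [g2 phi_g2] := phi_onto M2.
  have -> : g = mul g1 g2 by apply: phi_inj => w; rewrite phi_g phiM /= phi_g1 phi_g2.
  by apply: ggen_ext (ggen_comp (IH1 _ phi_g1) (IH2 _ phi_g2)) _ => w; rewrite restr_mapM.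
- by apply: IH => w; rewrite phi_g eq_f.
Qed.

Lemma restr_map_onto f : R f -> exists g, psi g =1 f.
Proof.
elim=> {f} [_ [q ->] | | f1 f2 _ [g1 psi_g1] _ [g2 psi_g2] | f1 f2 _ [g psi_g] f12K f21K
          | f1 f2 _ [g psi_g] eq_f].
- have [g phi_g] := phi_onto (sgen_base (ex_intro _ q erefl)).
  by exists g; apply: restr_map_state.
- by exists one; apply: restr_map_one.
- by exists (mul g1 g2) => w; rewrite restr_mapM /= psi_g1 psi_g2.
- by exists (inv g) => w; rewrite -{1}(f21K w) -psi_g restr_mapK.
- by exists g => w; rewrite psi_g.
Qed.

Lemma iso_restr : iso_to_maps mul R.
Proof.
exists psi; split.
- exact: restr_map_in.
- exact: restr_map_onto.
- exact: restr_map_inj.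
- exact: restr_mapM.
Qed.

End RestrictedAutomaton.

Lemma expanding_iso_group (S : finType) (Q : Type) (t : Q -> S -> Q) (o : Q -> S -> seq S)
    (G : Type) (mul : G -> G -> G) (one : G) (inv : G -> G) :
  (forall q s, o q s <> [::]) -> is_group mul one inv ->
  iso_to_maps mul (sgen (fun f => exists q, f = exp_act t o q)) ->
  exists (A : finType) (t' : Q -> A -> Q) (o' : Q -> A -> A),
    (forall q, bijective (o' q)) /\
    iso_to_maps mul (ggen (fun f => exists q, f = sync_act t' o' q)).
Proof.
move=> o_neq0 hG [phi [phi_in phi_onto phi_inj phiM]].
exists (fixed_alphabet one phi), (@restr_trans _ _ t _ one phi), (@restr_out _ _ o _ one phi).
split; [exact: (restr_out_bij o_neq0 hG phi_in phi_onto phi_inj phiM) |].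
exact: (iso_restr o_neq0 hG phi_in phi_onto phi_inj phiM).
Qed.

Theorem mainTheorem10 (G : Type) (mul : G -> G -> G) (one : G) (inv : G -> G)
    (hG : is_group mul one inv) :
  (iso_automaton_group mul <-> iso_expanding_automaton_semigroup mul) /\
  (iso_self_similar_group mul <-> iso_expanding_self_similar_semigroup mul).
Proof.
split; split.
- move=> [S [Q [t [o [o_bij iso]]]]].
  exists S, (option (Q + Q) : finType), (sym_trans t o), (sym_out o).
  by split; [exact: sym_out_neq0 | exact: iso_to_maps_eq (ggen_sym_act t o_bij) iso].
- move=> [S [Q [t [o [o_neq0 /(expanding_iso_group o_neq0 hG) [A [t' [o' iso]]]]]]]].
  by exists A, Q, t', o'.
- move=> [S [Q [t [o [o_bij iso]]]]].
  exists S, (option (Q + Q)), (sym_trans t o), (sym_out o).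
  by split; [exact: sym_out_neq0 | exact: iso_to_maps_eq (ggen_sym_act t o_bij) iso].
- move=> [S [Q [t [o [o_neq0 /(expanding_iso_group o_neq0 hG) [A [t' [o' iso]]]]]]]].
  by exists A, Q, t', o'.
Qed.
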